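(* Fix $k\in\{1,\dots,K\}$ and arbitrary matrices $\mathbf{V}_1^{(i)},\dots,\mathbf{V}_G^{(i)}\in\mathbb{C}^{M\times d}$, and let $h_k^{(i)}$ be defined as in the context. Then: (C.a) For all $\mathbf{V}_1,\dots,\mathbf{V}_G\in\mathbb{C}^{M\times d}$, $$h_k^{(i)}(\{\mathbf{V}_g\})\ \ge\ -\log\det\big(\mathbf{I}_N+\mathbf{H}_k\mathbf{V}_{g_k}\mathbf{V}_{g_k}^H\mathbf{H}_k^H\mathbf{J}_k\big),$$ with equality when $\mathbf{V}_g=\mathbf{V}_g^{(i)}$ for all $g=1,\dots,G$. (C.b) At $\{\mathbf{V}_g\}=\{\mathbf{V}_g^{(i)}\}$, the partial derivatives of $h_k^{(i)}$ and of $\{\mathbf{V}_g\}\mapsto-\log\det\big(\mathbf{I}_N+\mathbf{H}_k\mathbf{V}_{g_k}\mathbf{V}_{g_k}^H\mathbf{H}_k^H\mathbf{J}_k\big)$ with respect to the real part and the imaginary part of every entry of every $\mathbf{V}_g$, $g=1,\dots,G$, coincide. Moreover $h_k^{(i)}$ is a convex quadratic function of $\{\mathbf{V}_g\}$.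
   Context: Setting: there are $G$ clusters and $K$ base stations; BS $k$ belongs to cluster $g_k\in\{1,\dots,G\}$. Integers $M>N\ge1$ are given and $d=N$. For each $k$, $\mathbf{H}_k\in\mathbb{C}^{N\times M}$ is fixed and $\sigma_k^2>0$. Variables $\mathbf{V}_g\in\mathbb{C}^{M\times d}$, $g=1,\dots,G$. Define $$\mathbf{J}_k=\Big(\sum_{g'\neq g_k}\mathbf{H}_k\mathbf{V}_{g'}\mathbf{V}_{g'}^H\mathbf{H}_k^H+\sigma_k^2\mathbf{I}_N\Big)^{-1},$$ $$\hat{\mathbf{U}}_k^{(i)}=\Big(\sum_{g=1}^G\mathbf{H}_k\mathbf{V}_g^{(i)}(\mathbf{V}_g^{(i)})^H\mathbf{H}_k^H+\sigma_k^2\mathbf{I}_N\Big)^{-1}\mathbf{H}_k\mathbf{V}_{g_k}^{(i)},\qquad \hat{\mathbf{Q}}_k^{(i)}=\mathbf{I}_d-(\hat{\mathbf{U}}_k^{(i)})^H\mathbf{H}_k\mathbf{V}_{g_k}^{(i)},$$ $$\hat{\mathbf{A}}_k^{(i)}=\mathbf{H}_k^H\hat{\mathbf{U}}_k^{(i)}(\hat{\mathbf{Q}}_k^{(i)})^{-1}(\hat{\mathbf{U}}_k^{(i)})^H\mathbf{H}_k,\qquad \hat{\mathbf{B}}_k^{(i)}=-(\hat{\mathbf{Q}}_k^{(i)})^{-1}(\hat{\mathbf{U}}_k^{(i)})^H\mathbf{H}_k,$$ $$\hat b_k^{(i)}=\mathrm{Tr}\Big((\hat{\mathbf{Q}}_k^{(i)})^{-1}\big(\mathbf{I}_d+\sigma_k^2(\hat{\mathbf{U}}_k^{(i)})^H\hat{\mathbf{U}}_k^{(i)}\big)\Big)+\log\det\hat{\mathbf{Q}}_k^{(i)}-d,$$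 $$h_k^{(i)}(\{\mathbf{V}_g\})=\sum_{g=1}^G\mathrm{Tr}\big(\mathbf{V}_g^H\hat{\mathbf{A}}_k^{(i)}\mathbf{V}_g\big)+2\,\Re\{\mathrm{Tr}(\hat{\mathbf{B}}_k^{(i)}\mathbf{V}_{g_k})\}+\hat b_k^{(i)}.$$ Here $\log$ is the natural logarithm. *)

From Stdlib Require Import Reals Lra Psatz.
From Stdlib Require Import Classical ClassicalEpsilon FunctionalExtensionality PropExtensionality.
From HB Require Import structures.
From mathcomp Require Import all_boot all_order all_algebra.

Set Implicit Arguments.
Unset Strict Implicit.
Unset Printing Implicit Defensive.

Import GRing.Theory.

Record cplx := Cplx { cre : R; cim : R }.

Lemma cplx_eqP : Equality.axiom (fun x y : cplx =>
  if excluded_middle_informative (x = y) then true else false).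
Proof.
move=> x y; case: excluded_middle_informative => h; [exact: ReflectT|exact: ReflectF].
Qed.
HB.instance Definition _ := hasDecEq.Build cplx cplx_eqP.

Definition cplx_find (P : pred cplx) (n : nat) : option cplx :=
  match excluded_middle_informative (exists x, P x) with
  | left h => Some (proj1_sig (constructive_indefinite_description _ h))
  | right _ => None
  end.

Lemma cplx_find_correct P n x : cplx_find P n = Some x -> P x.
Proof.
rewrite /cplx_find; case: excluded_middle_informative => // h [<-].
exact: proj2_sig (constructive_indefinite_description _ h).
Qed.

Lemma cplx_find_complete (P : pred cplx) : (exists x, P x) -> exists n, cplx_find P n.
Proof. by move=> h; exists 0%N; rewrite /cplx_find; case: excluded_middle_informative. Qed.

Lemma cplx_find_ext (P Q : pred cplx) : P =1 Q -> cplx_find P =1 cplx_find Q.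
Proof. by move=> /functional_extensionality ->. Qed.

HB.instance Definition _ := hasChoice.Build cplx
  cplx_find_correct cplx_find_complete cplx_find_ext.

Definition czero := Cplx R0 R0.
Definition cone := Cplx R1 R0.
Definition copp (x : cplx) := Cplx (Ropp (cre x)) (Ropp (cim x)).
Definition cadd (x y : cplx) := Cplx (Rplus (cre x) (cre y)) (Rplus (cim x) (cim y)).
Definition cmul (x y : cplx) :=
  Cplx (Rminus (Rmult (cre x) (cre y)) (Rmult (cim x) (cim y)))
       (Rplus (Rmult (cre x) (cim y)) (Rmult (cim x) (cre y))).
Definition cinv (x : cplx) :=
  let n := Rplus (Rmult (cre x) (cre x)) (Rmult (cim x) (cim x)) in
  Cplx (Rdiv (cre x) n) (Rdiv (Ropp (cim x)) n).

Lemma cplx_ext (x y : cplx) : cre x = cre y -> cim x = cim y -> x = y.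
Proof. by case: x; case: y => ? ? ? ? /= -> ->. Qed.

Lemma caddA : associative cadd.
Proof. by move=> x y z; apply: cplx_ext; rewrite /= Rplus_assoc. Qed.
Lemma caddC : commutative cadd.
Proof. by move=> x y; apply: cplx_ext; rewrite /= Rplus_comm. Qed.
Lemma cadd0 : left_id czero cadd.
Proof. by move=> x; apply: cplx_ext; rewrite /= Rplus_0_l. Qed.
Lemma caddN : left_inverse czero copp cadd.
Proof. by move=> x; apply: cplx_ext; rewrite /= Rplus_opp_l. Qed.

HB.instance Definition _ := GRing.isZmodule.Build cplx caddA caddC cadd0 caddN.

Lemma cmulA : associative cmul.
Proof. by move=> x y z; apply: cplx_ext => /=; ring. Qed.
Lemma cmulC : commutative cmul.
Proof. by move=> x y; apply: cplx_ext => /=; ring. Qed.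
Lemma cmul1 : left_id cone cmul.
Proof. by move=> x; apply: cplx_ext => /=; ring. Qed.
Lemma cmulDl : left_distributive cmul cadd.
Proof. by move=> x y z; apply: cplx_ext => /=; ring. Qed.
Lemma cone_neq0 : cone != czero.
Proof.
apply/eqP => h; have := f_equal cre h => /= ; exact: R1_neq_R0.
Qed.

HB.instance Definition _ := GRing.Zmodule_isComNzRing.Build cplx
  cmulA cmulC cmul1 cmulDl cone_neq0.

Lemma cmulVf (x : cplx) : (x != 0)%R -> cmul (cinv x) x = 1%R.
Proof.
move=> /eqP nz.
have hn : Rplus (Rmult (cre x) (cre x)) (Rmult (cim x) (cim x)) <> R0.
  move=> h; apply: nz; apply: cplx_ext => /=; nra.
by apply: cplx_ext => /=; field.
Qed.
Lemma cinv0 : cinv 0%R = 0%R.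
Proof. by apply: cplx_ext; rewrite /= /Rdiv !Rmult_0_l ?Ropp_0 ?Rmult_0_l. Qed.

HB.instance Definition _ := GRing.ComNzRing_isField.Build cplx cmulVf cinv0.

Definition RtoC (r : R) : cplx := Cplx r R0.
Definition iC : cplx := Cplx R0 R1.
Definition conjc (x : cplx) : cplx := Cplx (cre x) (Ropp (cim x)).

Local Open Scope ring_scope.

Definition herm m n (A : 'M[cplx]_(m, n)) : 'M[cplx]_(n, m) := (map_mx conjc A)^T.

Section Model.
Variables (G K N M : nat).
Variable gk : 'I_K -> 'I_G.                       (* cluster of BS k *)
Variable H : 'I_K -> 'M[cplx]_(N, M).
Variable sigma2 : 'I_K -> R.

(* precoders V_g in C^{M x d} with d = N *)
Definition precoders := 'I_G -> 'M[cplx]_(M, N).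

Definition Jmat (k : 'I_K) (V : precoders) : 'M[cplx]_N :=
  invmx (\sum_(g < G | g != gk k) (H k *m V g *m herm (V g) *m herm (H k))
         + (RtoC (sigma2 k))%:M).

Definition Uhat (k : 'I_K) (Vi : precoders) : 'M[cplx]_N :=
  invmx (\sum_(g < G) (H k *m Vi g *m herm (Vi g) *m herm (H k))
         + (RtoC (sigma2 k))%:M) *m H k *m Vi (gk k).

Definition Qhat k Vi : 'M[cplx]_N := 1%:M - herm (Uhat k Vi) *m H k *m Vi (gk k).

Definition Ahat k Vi : 'M[cplx]_M :=
  herm (H k) *m Uhat k Vi *m invmx (Qhat k Vi) *m herm (Uhat k Vi) *m H k.

Definition Bhat k Vi : 'M[cplx]_(N, M) :=
  - (invmx (Qhat k Vi) *m herm (Uhat k Vi) *m H k).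

(* the traces below are real numbers; we take their real parts explicitly,
   and log det of the Hermitian positive definite Q is ln of the real part of det *)
Definition bhat k Vi : R :=
  Rminus (Rplus (cre (\tr (invmx (Qhat k Vi) *m
                     (1%:M + RtoC (sigma2 k) *: (herm (Uhat k Vi) *m Uhat k Vi)))))
                (ln (cre (\det (Qhat k Vi)))))
         (INR N).

Definition hsur (k : 'I_K) (Vi V : precoders) : R :=
  Rplus (Rplus (cre (\sum_(g < G) \tr (herm (V g) *m Ahat k Vi *m V g)))
               (Rmult (Rplus R1 R1) (cre (\tr (Bhat k Vi *m V (gk k))))))
        (bhat k Vi).

(* -log det (I_N + H_k V_{g_k} V_{g_k}^H H_k^H J_k) ; the determinant is a
   positive real number, so log det is ln of its real part *)
Definition negrate (k : 'I_K) (V : precoders) : R :=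
  Ropp (ln (cre (\det (1%:M + H k *m V (gk k) *m herm (V (gk k)) *m herm (H k) *m Jmat k V)))).

End Model.

Definition prec_add G M N (V W : 'I_G -> 'M[cplx]_(M, N)) : 'I_G -> 'M[cplx]_(M, N) :=
  fun g => V g + W g.
Definition prec_scale G M N (t : R) (V : 'I_G -> 'M[cplx]_(M, N)) : 'I_G -> 'M[cplx]_(M, N) :=
  fun g => RtoC t *: V g.

Definition perturb G M N (V : 'I_G -> 'M[cplx]_(M, N)) (g : 'I_G) (a : 'I_M) (b : 'I_N)
  (c : cplx) : 'I_G -> 'M[cplx]_(M, N) :=
  fun g' => if g' == g then V g' + c *: delta_mx a b else V g'.

(* Write Y = H_k V_{g_k}, S = sum_g H_k V_g V_g^H H_k^H + sigma_k^2 I, U(V) = S^-1 Y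
   for the MMSE receiver and E(V) = I - Y^H S^-1 Y for the MMSE matrix.  A Schur
   complement argument gives det E(V) det S = det J_k^-1, so the negated rate is
   ln det E(V).  With Q = E(V^(i)) and U = U(V^(i)), the surrogate equals
   tr(Q^-1 E(U, V)) + ln det Q - d, where E(U, V) is the MSE matrix of the fixed
   receiver U, a quadratic in V with positive semidefinite curvature.  Since
   E(U, V) = E(V) + (U - U(V))^H S (U - U(V)) and, by concavity of ln det,
   ln det E <= tr(Q^-1 E) + ln det Q - d, the surrogate majorizes the negated rate
   and touches it at V^(i); a differentiable function lying below a differentiable
   majorant that touches it has the majorant's derivative there. *)

From Stdlib Require Import Reals FunctionalExtensionality.
From HB Require Import structures.
From mathcomp Require Import all_boot all_order all_algebra.
From mathcomp Require Import Rstruct ring lra.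

Set Implicit Arguments.
Unset Strict Implicit.
Unset Printing Implicit Defensive.

Import Order.TTheory GRing.Theory Num.Theory.
Local Open Scope ring_scope.

(* [R0] and [R1] are opaque constants, only convertible to [0] and [1]. *)
Ltac rnorm :=
  rewrite ?RealsE; try change R0 with (@GRing.zero R); try change R1 with (@GRing.one R).

Lemma creD x y : cre (x + y) = cre x + cre y. Proof. by []. Qed.
Lemma creN x : cre (- x) = - cre x. Proof. by []. Qed.
Lemma cre_conjc x : cre (conjc x) = cre x. Proof. by []. Qed.
Lemma cre_natr n : cre n%:R = n%:R.
Proof. by elim: n => // n IH; rewrite !mulrS creD IH. Qed.
Lemma creR r : cre (RtoC r) = r. Proof. by []. Qed.

Lemma cre_sum I (r : seq I) (P : pred I) (F : I -> cplx) :
  cre (\sum_(i <- r | P i) F i) = \sum_(i <- r | P i) cre (F i).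
Proof. exact: (big_morph cre creD). Qed.

Lemma conjc_is_zmod_morphism : zmod_morphism conjc.
Proof. by move=> x y; apply: cplx_ext => /=; rnorm; ring. Qed.
HB.instance Definition _ :=
  GRing.isZmodMorphism.Build cplx cplx conjc conjc_is_zmod_morphism.

Lemma conjc_is_monoid_morphism : monoid_morphism conjc.
Proof. by split=> [|x y]; apply: cplx_ext => /=; rnorm; ring. Qed.
HB.instance Definition _ :=
  GRing.isMonoidMorphism.Build cplx cplx conjc conjc_is_monoid_morphism.

Lemma conjcK : involutive conjc.
Proof. by move=> x; apply: cplx_ext => /=; rnorm; ring. Qed.

Lemma conjc_RtoC r : conjc (RtoC r) = RtoC r.
Proof. by apply: cplx_ext => /=; rnorm; ring. Qed.

Lemma RtoC_real x : cim x = 0 -> x = RtoC (cre x).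
Proof. by move=> h; apply: cplx_ext. Qed.

Lemma RtoC_is_zmod_morphism : zmod_morphism RtoC.
Proof. by move=> r s; apply: cplx_ext => /=; rnorm; ring. Qed.
HB.instance Definition _ :=
  GRing.isZmodMorphism.Build R cplx RtoC RtoC_is_zmod_morphism.

Lemma RtoC_is_monoid_morphism : monoid_morphism RtoC.
Proof. by split=> // r s; apply: cplx_ext => /=; rnorm; ring. Qed.
HB.instance Definition _ :=
  GRing.isMonoidMorphism.Build R cplx RtoC RtoC_is_monoid_morphism.

Lemma creRM r x : cre (RtoC r * x) = r * cre x.
Proof. by rewrite /= /GRing.mul /=; rnorm; ring. Qed.

Lemma mul_conjc x : x * conjc x = RtoC (cre x ^+ 2 + cim x ^+ 2).
Proof. by apply: cplx_ext => /=; rnorm; ring. Qed.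

Lemma normc2_gt0 x : x != 0 -> 0 < cre x ^+ 2 + cim x ^+ 2.
Proof.
move=> nz; rewrite lt_def paddr_eq0 ?sqr_ge0 // !sqrf_eq0 addr_ge0 ?sqr_ge0 //.
by rewrite andbT; apply: contra nz => /andP[/eqP h1 /eqP h2]; apply/eqP/cplx_ext.
Qed.

Lemma hermE m n (A : 'M[cplx]_(m, n)) i j : herm A i j = conjc (A j i).
Proof. by rewrite !mxE. Qed.

Lemma hermK m n : cancel (@herm m n) (@herm n m).
Proof. by move=> A; apply/matrixP => i j; rewrite !hermE conjcK. Qed.

Lemma hermM m n p (A : 'M[cplx]_(m, n)) (B : 'M_(n, p)) :
  herm (A *m B) = herm B *m herm A.
Proof. by rewrite /herm map_mxM trmx_mul. Qed.

Lemma herm_is_zmod_morphism m n : zmod_morphism (@herm m n).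
Proof. by move=> A B; apply/matrixP => i j; rewrite !(hermE, mxE) rmorphB. Qed.
HB.instance Definition _ m n :=
  GRing.isZmodMorphism.Build _ _ (@herm m n) (@herm_is_zmod_morphism m n).

Lemma hermD m n (A B : 'M[cplx]_(m, n)) : herm (A + B) = herm A + herm B.
Proof. exact: raddfD. Qed.

Lemma hermB m n (A B : 'M[cplx]_(m, n)) : herm (A - B) = herm A - herm B.
Proof. exact: raddfB. Qed.

Lemma herm0 m n : herm (0 : 'M[cplx]_(m, n)) = 0.
Proof. exact: raddf0. Qed.

Lemma hermZ m n c (A : 'M[cplx]_(m, n)) : herm (c *: A) = conjc c *: herm A.
Proof. by apply/matrixP => i j; rewrite !(hermE, mxE) rmorphM. Qed.

Lemma herm_scalar n c : herm (c%:M : 'M[cplx]_n) = (conjc c)%:M.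
Proof. by rewrite /herm map_scalar_mx tr_scalar_mx. Qed.

Lemma herm1 n : herm (1%:M : 'M[cplx]_n) = 1%:M.
Proof. by rewrite herm_scalar rmorph1. Qed.

Lemma herm_invmx n (A : 'M[cplx]_n) : herm (invmx A) = invmx (herm A).
Proof. by rewrite /herm map_invmx trmx_inv. Qed.

Lemma mxtrace_herm n (A : 'M[cplx]_n) : \tr (herm A) = conjc (\tr A).
Proof. by rewrite /mxtrace rmorph_sum; apply: eq_bigr => i _; rewrite hermE. Qed.

Lemma det_herm n (A : 'M[cplx]_n) : \det (herm A) = conjc (\det A).
Proof. by rewrite /herm det_tr det_map_mx. Qed.

Lemma unitmx_herm n (A : 'M[cplx]_n) : (herm A \in unitmx) = (A \in unitmx).
Proof. by rewrite !unitmxE det_herm !unitfE fmorph_eq0. Qed.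

Lemma herm_delta_mx m n (a : 'I_m) (b : 'I_n) : herm (delta_mx a b) = delta_mx b a.
Proof. by rewrite /herm map_delta_mx ?rmorph0 ?rmorph1 // trmx_delta. Qed.

Lemma herm_block_mx m1 m2 n1 n2 (Aul : 'M[cplx]_(m1, n1)) (Aur : 'M_(m1, n2))
    (Adl : 'M_(m2, n1)) (Adr : 'M_(m2, n2)) :
  herm (block_mx Aul Aur Adl Adr) =
  block_mx (herm Aul) (herm Adl) (herm Aur) (herm Adr).
Proof. by rewrite /herm map_block_mx tr_block_mx. Qed.

Lemma herm_col_mx m1 m2 n (A : 'M[cplx]_(m1, n)) (B : 'M_(m2, n)) :
  herm (col_mx A B) = row_mx (herm A) (herm B).
Proof. by rewrite /herm map_col_mx tr_col_mx. Qed.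

Lemma mxtrace_gram m n (X : 'M[cplx]_(m, n)) :
  cre (\tr (herm X *m X)) = \sum_i \sum_j (cre (X j i) ^+ 2 + cim (X j i) ^+ 2).
Proof.
rewrite /mxtrace cre_sum; apply: eq_bigr => i _; rewrite mxE cre_sum.
by apply: eq_bigr => j _; rewrite hermE mulrC mul_conjc.
Qed.

Lemma mxtrace_gram_ge0 m n (X : 'M[cplx]_(m, n)) : 0 <= cre (\tr (herm X *m X)).
Proof.
rewrite mxtrace_gram; apply: sumr_ge0 => i _; apply: sumr_ge0 => j _.
by rewrite addr_ge0 // sqr_ge0.
Qed.

Lemma mxtrace_gram_gt0 m n (X : 'M[cplx]_(m, n)) :
  X != 0 -> 0 < cre (\tr (herm X *m X)).
Proof.
move=> nz; have /existsP[j /existsP[i Xji]] : [exists j, exists i, X j i != 0].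
  apply: contraR nz => /existsPn X0; apply/eqP/matrixP => j i; rewrite mxE.
  by move/existsPn: (X0 j) => /(_ i)/negPn/eqP.
rewrite mxtrace_gram (bigD1 i) //= (bigD1 j) //= -addrA ltr_pwDl ?normc2_gt0 //.
by rewrite addr_ge0 ?sumr_ge0 // => *; rewrite ?sumr_ge0 // => *; rewrite addr_ge0 ?sqr_ge0.
Qed.

Lemma mxtrace11 (R : pzRingType) (A : 'M[R]_1) : \tr A = A 0 0.
Proof. by rewrite /mxtrace big_ord1. Qed.

Definition qform n (A : 'M[cplx]_n) (x : 'cV[cplx]_n) : R := cre (\tr (herm x *m A *m x)).
Definition hermitian n (A : 'M[cplx]_n) := herm A = A.
Definition posdef n (A : 'M[cplx]_n) := hermitian A /\ forall x, x != 0 -> 0 < qform A x.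
Definition psdef n (A : 'M[cplx]_n) := hermitian A /\ forall x, 0 <= qform A x.

Section PositiveMatrices.
Variable n : nat.
Implicit Types A B : 'M[cplx]_n.

Lemma qform0 A : qform A 0 = 0.
Proof. by rewrite /qform mulmx0 mxtrace0. Qed.

Lemma qformD A B x : qform (A + B) x = qform A x + qform B x.
Proof. by rewrite /qform mulmxDr mulmxDl mxtraceD creD. Qed.

Lemma qform_cong m (P : 'M[cplx]_(m, n)) A x :
  qform (P *m A *m herm P) x = qform A (herm P *m x).
Proof. by rewrite /qform hermM hermK !mulmxA. Qed.

Lemma posdef_psdef A : posdef A -> psdef A.
Proof.
case=> hA pA; split=> // x; have [->|/pA/ltW//] := eqVneq x 0.
by rewrite qform0.
Qed.

Lemma hermitian_cong m (P : 'M[cplx]_(m, n)) A :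
  hermitian A -> hermitian (P *m A *m herm P).
Proof. by rewrite /hermitian !hermM hermK => ->; rewrite mulmxA. Qed.

Lemma psdef_cong m (P : 'M[cplx]_(m, n)) A : psdef A -> psdef (P *m A *m herm P).
Proof. by case=> hA pA; split=> [|x]; [exact: hermitian_cong | rewrite qform_cong]. Qed.

Lemma posdef_cong (P : 'M[cplx]_n) A :
  P \in unitmx -> posdef A -> posdef (P *m A *m herm P).
Proof.
move=> uP [hA pA]; split=> [|x nz]; first exact: hermitian_cong.
rewrite qform_cong; apply: pA; apply: contra nz => /eqP Px0.
by rewrite -[x](mulKmx (_ : herm P \in unitmx)) ?unitmx_herm // Px0 mulmx0.
Qed.

Lemma psdef_gram m (X : 'M[cplx]_(n, m)) : psdef (X *m herm X).
Proof.
split=> [|x]; first by rewrite /hermitian hermM hermK.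
rewrite /qform.
have -> : herm x *m (X *m herm X) *m x = herm (herm X *m x) *m (herm X *m x).
  by rewrite hermM hermK !mulmxA.
exact: mxtrace_gram_ge0.
Qed.

Lemma posdef_scalar (s : R) : 0 < s -> posdef ((RtoC s)%:M : 'M[cplx]_n).
Proof.
move=> s0; split=> [|x nz]; first by rewrite /hermitian herm_scalar conjc_RtoC.
by rewrite /qform mul_mx_scalar -scalemxAl mxtraceZ creRM mulr_gt0 ?mxtrace_gram_gt0.
Qed.

Lemma posdef_add_psdef A B : posdef A -> psdef B -> posdef (A + B).
Proof.
case=> hA pA [hB pB]; split=> [|x nz]; first by rewrite /hermitian hermD hA hB.
by rewrite qformD ltr_pwDl ?pA.
Qed.

Lemma psdef_add A B : psdef A -> psdef B -> psdef (A + B).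
Proof.
case=> hA pA [hB pB]; split=> [|x]; first by rewrite /hermitian hermD hA hB.
by rewrite qformD addr_ge0.
Qed.

Lemma psdef_sum I (r : seq I) (P : pred I) (F : I -> 'M[cplx]_n) :
  (forall i, P i -> psdef (F i)) -> psdef (\sum_(i <- r | P i) F i).
Proof.
move=> psdF; elim/big_ind: _ => //; last exact: psdef_add.
by split=> [|x]; rewrite /hermitian ?herm0 // /qform mulmx0 mul0mx mxtrace0.
Qed.

Lemma qform_delta A i : qform A (delta_mx i 0) = cre (A i i).
Proof. by rewrite /qform herm_delta_mx -rowE -colE mxtrace11 !mxE. Qed.

Lemma psdef_mxtrace_ge0 A : psdef A -> 0 <= cre (\tr A).
Proof.
by case=> _ pA; rewrite /mxtrace cre_sum sumr_ge0 // => i _; rewrite -qform_delta.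
Qed.

Lemma posdef_diag_gt0 A i : posdef A -> 0 < cre (A i i).
Proof.
case=> _ pA; rewrite -qform_delta pA //; apply/eqP => /matrixP/(_ i 0)/eqP.
by rewrite !mxE !eqxx oner_eq0.
Qed.

Lemma hermitian_diag_real A i : hermitian A -> A i i = RtoC (cre (A i i)).
Proof.
move/matrixP/(_ i i); rewrite hermE => Aii; apply: RtoC_real.
by have := f_equal cim Aii => /=; rnorm => h; lra.
Qed.

End PositiveMatrices.

Lemma posdef_block_diag_dr n1 n2 (A : 'M[cplx]_n1) (S : 'M[cplx]_n2) :
  posdef (block_mx A 0 0 S) -> posdef S.
Proof.
case=> hAS pAS; split=> [|y y0].
  by have := f_equal drsubmx hAS; rewrite herm_block_mx !block_mxKdr.
have := pAS (col_mx 0 y); rewrite col_mx_eq0 (negbTE y0) andbF => /(_ isT).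
by rewrite /qform herm_col_mx herm0 mul_row_block mul_row_col !(mulmx0, mul0mx, add0r).
Qed.

Lemma posdef_schur n (A : 'M[cplx]_(1 + n)) : posdef A ->
  exists (a : R) (S : 'M[cplx]_n) (b : 'M[cplx]_(n, 1)) (L : 'M[cplx]_(1 + n)),
  [/\ 0 < a, posdef S, \det L = 1,
      A = L *m block_mx (RtoC a)%:M 0 0 S *m herm L &
      \tr A = RtoC a + (\tr S + RtoC a^-1 * \tr (herm b *m b))].
Proof.
move=> pdA; have [hA _] := pdA.
set a := cre (A 0 0); set b := dlsubmx A.
have a_gt0 : 0 < a := posdef_diag_gt0 0 pdA.
have eA : A = block_mx (RtoC a)%:M (herm b) b (drsubmx A).
  rewrite -{1}[A]submxK; congr block_mx.
    by rewrite [LHS]mx11_scalar !mxE lshift0 -hermitian_diag_real.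
  by rewrite -{1}hA -{1}[A]submxK herm_block_mx block_mxKur.
have aVa : RtoC a^-1 * RtoC a = 1 by rewrite -rmorphM mulVf ?gt_eqF ?rmorph1.
set c := RtoC a^-1 *: b.
set S := drsubmx A - RtoC a^-1 *: (b *m herm b).
set L : 'M[cplx]_(1 + n) := block_mx 1%:M 0 c 1%:M.
set Linv : 'M[cplx]_(1 + n) := block_mx 1%:M 0 (- c) 1%:M.
have eLDL : A = L *m block_mx (RtoC a)%:M 0 0 S *m herm L.
  rewrite herm_block_mx !herm0 !herm1 hermZ conjc_RtoC !mulmx_block.
  rewrite !(mulmx1, mul1mx, mulmx0, mul0mx, addr0, add0r) {1}eA.
  rewrite /c -!scalemxAl mul_scalar_mx mul_mx_scalar -scalemxAr !scalerA.
  rewrite [RtoC a * _]mulrC aVa !scale1r -scalemxAl scalerA -mulrA aVa mulr1.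
  by rewrite /S addrC subrK.
have LinvL : Linv *m L = 1%:M.
  rewrite !mulmx_block !(mulmx1, mul1mx, mulmx0, mul0mx, addr0, add0r) addNr.
  by rewrite -scalar_mx_block.
have pdS : posdef S.
  apply: (@posdef_block_diag_dr 1 n (RtoC a)%:M).
  have -> : block_mx (RtoC a)%:M 0 0 S = Linv *m A *m herm Linv.
    by rewrite eLDL !mulmxA LinvL mul1mx -mulmxA -hermM LinvL herm1 mulmx1.
  by apply: posdef_cong => //; rewrite unitmxE det_lblock !det1 mulr1 unitr1.
exists a, S, b, L; split=> //; first by rewrite det_lblock !det1 mulr1.
rewrite {1}eA mxtrace_block mxtrace11 mxE eqxx mulr1n; congr (_ + _).
rewrite -[drsubmx A](subrK (RtoC a^-1 *: (b *m herm b))).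
by rewrite mxtraceD mxtraceZ mxtrace_mulC.
Qed.

Lemma det_cong_det1 n (L D : 'M[cplx]_n) : \det L = 1 -> \det (L *m D *m herm L) = \det D.
Proof. by move=> detL; rewrite !det_mulmx det_herm detL rmorph1 mul1r mulr1. Qed.

Lemma posdef_det n (A : 'M[cplx]_n) : posdef A -> exists2 d : R, 0 < d & \det A = RtoC d.
Proof.
elim: n A => [|n IH] A pdA; first by exists 1; rewrite ?ltr01 ?det_mx00 ?rmorph1.
have [a [S [b [L [a_gt0 pdS detL -> _]]]]] := posdef_schur pdA.
have [d d_gt0 detS] := IH S pdS; exists (a * d); first exact: mulr_gt0.
by rewrite det_cong_det1 // (@det_ublock _ 1 n) det_scalar1 detS rmorphM.
Qed.

Lemma posdef_unitmx n (A : 'M[cplx]_n) : posdef A -> A \in unitmx.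
Proof.
by case/posdef_det => d d_gt0 detA; rewrite unitmxE detA unitfE fmorph_eq0 gt_eqF.
Qed.

Lemma ln_le_subr1 (x : R) : 0 < x -> ln x <= x - 1.
Proof.
move=> /RltP x_gt0; have /RleP := exp_ineq1_le (ln x); rewrite exp_ln //.
by rnorm => h; lra.
Qed.

(* Along the Schur recursion, [tr A - ln det A] increases by [a - ln a >= 1]
   at each step, up to a nonnegative term. *)
Lemma posdef_logdet_le_mxtrace n (A : 'M[cplx]_n) :
  posdef A -> n%:R + ln (cre (\det A)) <= cre (\tr A).
Proof.
elim: n A => [|n IH] A pdA; first by rewrite det_mx00 /= ln_1 /mxtrace big_ord0 addr0.
have [a [S [b [L [a_gt0 pdS detL eA ->]]]]] := posdef_schur pdA.
have [d d_gt0 detS] := posdef_det pdS.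
have {IH} := IH S pdS; rewrite detS creR => IHS.
have detA : \det A = RtoC (a * d).
  by rewrite eA det_cong_det1 // (@det_ublock _ 1 n) det_scalar1 detS rmorphM.
have b_ge0 : 0 <= cre (RtoC a^-1 * \tr (herm b *m b)).
  by rewrite creRM mulr_ge0 ?mxtrace_gram_ge0 // invr_ge0 ltW.
have /RltP a_gt0' := a_gt0; have /RltP d_gt0' := d_gt0.
have := ln_le_subr1 a_gt0; move: b_ge0 IHS.
by rewrite detA creR ln_mult // -natr1 !creD creR; rnorm; lra.
Qed.

Lemma posdef_cholesky n (A : 'M[cplx]_n) :
  posdef A -> exists2 F, F \in unitmx & A = F *m herm F.
Proof.
elim: n A => [|n IH] A pdA.
  by exists 1%:M; [exact: unitmx1 | apply/matrixP => i []].
have [a [S [b [L [a_gt0 pdS detL eA _]]]]] := posdef_schur pdA.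
have [F uF eS] := IH S pdS.
set s := Num.sqrt a.
pose B : 'M[cplx]_(1 + n) := block_mx (RtoC s)%:M 0 0 F.
exists (L *m B).
  rewrite unitmx_mul unitmxE detL unitr1 unitmxE (@det_ublock _ 1 n) det_scalar1.
  by rewrite unitrM -unitmxE uF unitfE fmorph_eq0 sqrtr_eq0 -ltNge a_gt0.
rewrite eA hermM !mulmxA -[L *m B *m herm B]mulmxA (@herm_block_mx 1 n 1 n).
rewrite !herm0 herm_scalar conjc_RtoC (@mulmx_block _ 1 n 1 n 1 n).
by rewrite !(mulmx0, mul0mx, addr0, add0r) -scalar_mxM -rmorphM -expr2 sqr_sqrtr ?ltW // eS.
Qed.

Lemma invmxM n (A B : 'M[cplx]_n) : A \in unitmx -> B \in unitmx ->
  invmx (A *m B) = invmx B *m invmx A.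
Proof.
move=> uA uB; have uAB : A *m B \in unitmx by rewrite unitmx_mul uA.
have AB_inv : A *m B *m (invmx B *m invmx A) = 1%:M.
  by rewrite mulmxA -(mulmxA A) mulmxV // mulmx1 mulmxV.
by rewrite -[LHS]mulmx1 -AB_inv mulmxA mulVmx // mul1mx.
Qed.

Lemma posdef_invmx n (A : 'M[cplx]_n) : posdef A -> posdef (invmx A).
Proof.
move=> pdA; have uA := posdef_unitmx pdA; have [hA _] := pdA.
have -> : invmx A = invmx A *m A *m herm (invmx A).
  by rewrite herm_invmx hA mulVmx ?mul1mx.
by apply: posdef_cong; rewrite ?unitmx_inv.
Qed.

Lemma mxtrace_posdef_psdef_ge0 n (W B : 'M[cplx]_n) :
  posdef W -> psdef B -> 0 <= cre (\tr (W *m B)).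
Proof.
case/posdef_cholesky => F _ -> psdB.
rewrite -mulmxA mxtrace_mulC; apply: psdef_mxtrace_ge0.
by have := psdef_cong (herm F) psdB; rewrite hermK.
Qed.

Lemma logdet_le_tangent n (Q E : 'M[cplx]_n) : posdef Q -> posdef E ->
  ln (cre (\det E)) <= cre (\tr (invmx Q *m E)) + ln (cre (\det Q)) - n%:R.
Proof.
move=> pdQ pdE; have [F uF eQ] := posdef_cholesky pdQ.
set P := invmx F *m E *m herm (invmx F).
have pdP : posdef P by apply: posdef_cong; rewrite ?unitmx_inv.
have trP : \tr P = \tr (invmx Q *m E).
  by rewrite /P mxtrace_mulC mulmxA eQ invmxM ?unitmx_herm // herm_invmx.
have detE : \det E = \det P * \det Q.
  have detF : \det F != 0 by rewrite -unitfE -unitmxE.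
  rewrite /P eQ herm_invmx !det_mulmx !det_inv !det_herm.
  by field; rewrite fmorph_eq0 detF.
have [p /RltP p_gt0 detP] := posdef_det pdP; have [q /RltP q_gt0 detQ] := posdef_det pdQ.
have := posdef_logdet_le_mxtrace pdP; rewrite detE trP detP detQ -rmorphM !creR ln_mult //.
by rnorm; lra.
Qed.

Lemma derivable_pt_ext (f g : R -> R) x :
  (forall t, f t = g t) -> derivable_pt f x -> derivable_pt g x.
Proof. by move=> efg [l fl]; exists l; apply: derivable_pt_lim_ext fl. Qed.

Lemma derivable_pt_ln_comp (f : R -> R) x :
  0 < f x -> derivable_pt f x -> derivable_pt (fun t => ln (f t)) x.
Proof.
move=> /RltP fx_gt0 df; apply: (derivable_pt_comp f ln x df).
by exists (f x)^-1; apply: derivable_pt_lim_ln.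
Qed.

Lemma derivable_pt_horner (p : {poly R}) x : derivable_pt (fun t => p.[t]) x.
Proof.
elim/poly_ind: p => [|p c dp].
  apply: (derivable_pt_ext (f := fun=> 0)) (derivable_pt_const _ _) => t.
  by rewrite horner0.
apply: (derivable_pt_ext (f := fun t => p.[t] * t + c)) => [t|].
  by rewrite hornerMXaddC.
apply: derivable_pt_plus (derivable_pt_const _ _).
exact: derivable_pt_mult dp (derivable_pt_id _).
Qed.

Lemma cre_horner_RtoC (p : {poly cplx}) t : cre p.[RtoC t] = (map_poly cre p).[t].
Proof.
rewrite horner_coef (horner_coef_wide _ (size_poly _ _)) cre_sum.
by apply: eq_bigr => i _; rewrite coef_map_id0 // -rmorphXn mulrC creRM [RHS]mulrC.

Qed.

Lemma derivable_pt_det_quadratic n (M0 M1 M2 : 'M[cplx]_n) x :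
  derivable_pt (fun t => cre (\det (M0 + RtoC t *: M1 + RtoC (t * t) *: M2))) x.
Proof.
pose P : 'M[{poly cplx}]_n :=
  \matrix_(i, j) ((M0 i j)%:P + (M1 i j)%:P * 'X + (M2 i j)%:P * 'X^2).
apply: (derivable_pt_ext (f := fun t => (map_poly cre (\det P)).[t])) => [t|].
  rewrite -cre_horner_RtoC -[_.[_]]/(horner_eval (RtoC t) (\det P)) -det_map_mx.
  congr (cre (\det _)); apply/matrixP => i j.
  rewrite !mxE -[LHS]/(_.[RtoC t]) !hornerE rmorphM.
  by rewrite mulrC [_ * M2 i j]mulrC mulrA.
exact: derivable_pt_horner.
Qed.

Lemma derivable_pt_lim_quadratic (a b c x : R) :
  derivable_pt_lim (fun t => a * (t * t) + b * t + c) x (a * (x + x) + b).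
Proof.
have := derivable_pt_lim_plus _ _ x _ _
  (derivable_pt_lim_plus _ _ x _ _
     (derivable_pt_lim_scal _ a x _
        (derivable_pt_lim_mult _ _ x _ _ (derivable_pt_lim_id x) (derivable_pt_lim_id x)))
     (derivable_pt_lim_scal _ b x _ (derivable_pt_lim_id x)))
  (derivable_pt_lim_const c x).
rewrite /Ranalysis1.id; rnorm; rewrite mul1r !mulr1 addr0.
by apply: derivable_pt_lim_ext => t.
Qed.

(* [f - g] has a minimum at [x], so its derivative vanishes there. *)
Lemma derivable_pt_lim_touching (f g : R -> R) x l m :
  (forall t, g t <= f t) -> g x = f x ->
  derivable_pt_lim f x l -> derivable_pt_lim g x m -> m = l.
Proof.
move=> gf gfx fl gm.
have fgl : derivable_pt_lim (fun t => f t - g t) x (l - m).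
  exact: derivable_pt_lim_ext (derivable_pt_lim_minus _ _ x _ _ fl gm).
have := deriv_minimum (fun t => f t - g t) (x - 1) (x + 1) x (exist _ _ fgl).
rewrite (derive_pt_eq_0 _ _ _ _ fgl).
have lo : Rlt (x - 1) x by apply/RltP; rewrite gtrBl ltr01.
have hi : Rlt x (x + 1) by apply/RltP; rewrite ltrDl ltr01.
have min : forall t, Rlt (x - 1) t -> Rlt t (x + 1) -> Rle (f x - g x) (f t - g t).
  by move=> t _ _; apply/RleP; rnorm; rewrite gfx subrr subr_ge0.
by move/(_ lo hi min)/eqP; rnorm; rewrite subr_eq0 => /eqP.
Qed.

Section Model.
Variables (G K N M : nat) (gk : 'I_K -> 'I_G).
Variables (H : 'I_K -> 'M[cplx]_(N, M)) (sigma2 : 'I_K -> R) (k : 'I_K).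
Hypothesis sigma2_gt0 : 0 < sigma2 k.

Local Notation Hk := (H k).
Local Notation prec := ('I_G -> 'M[cplx]_(M, N)).
Implicit Types V : prec.

(* [icov V] is J_k^-1; at [Vi], [mmse_rx] and [mmse_mx] are U^_k and Q^_k. *)
Definition stream_cov V g := Hk *m V g *m herm (V g) *m herm Hk.
Definition cov V := \sum_(g < G) stream_cov V g + (RtoC (sigma2 k))%:M.
Definition icov V := \sum_(g < G | g != gk k) stream_cov V g + (RtoC (sigma2 k))%:M.
Definition eff_chan V := Hk *m V (gk k).
Definition mmse_rx V := invmx (cov V) *m eff_chan V.
Definition mmse_mx V := 1%:M - herm (eff_chan V) *m invmx (cov V) *m eff_chan V.
Definition mse_mx (U : 'M[cplx]_N) V :=
  1%:M - herm U *m eff_chan V - herm (eff_chan V) *m U + herm U *m cov V *m U.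

Lemma stream_covE V g : stream_cov V g = Hk *m V g *m herm (Hk *m V g).
Proof. by rewrite /stream_cov hermM !mulmxA. Qed.

Lemma cov_icov V : cov V = icov V + eff_chan V *m herm (eff_chan V).
Proof.
rewrite /cov /icov (bigD1 (gk k)) //= stream_covE -/(eff_chan V).
by rewrite addrC -!addrA [_ + eff_chan V *m _]addrC.
Qed.

Lemma posdef_noise_plus_psdef (P : pred 'I_G) V :
  posdef (\sum_(g < G | P g) stream_cov V g + (RtoC (sigma2 k))%:M).
Proof.
rewrite addrC; apply: posdef_add_psdef; first exact: posdef_scalar.
by apply: psdef_sum => g _; rewrite stream_covE; apply: psdef_gram.
Qed.

Lemma posdef_cov V : posdef (cov V). Proof. exact: posdef_noise_plus_psdef. Qed.
Lemma posdef_icov V : posdef (icov V). Proof. exact: posdef_noise_plus_psdef. Qed.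

Lemma unitmx_cov V : cov V \in unitmx. Proof. exact/posdef_unitmx/posdef_cov. Qed.

Lemma herm_cov V : herm (cov V) = cov V. Proof. by case: (posdef_cov V). Qed.

Lemma cov_mmse_rx V : cov V *m mmse_rx V = eff_chan V.
Proof. by rewrite /mmse_rx mulKVmx // unitmx_cov. Qed.

Lemma herm_mmse_rx V : herm (mmse_rx V) = herm (eff_chan V) *m invmx (cov V).
Proof. by rewrite /mmse_rx hermM herm_invmx herm_cov. Qed.

Lemma mmse_mx_decomp V (P := 1%:M - herm (mmse_rx V) *m eff_chan V) :
  mmse_mx V = P *m herm P + herm (mmse_rx V) *m icov V *m mmse_rx V.
Proof.
set U := mmse_rx V; set Y := eff_chan V.
set Z := herm Y *m invmx (cov V) *m Y.
have UY : herm U *m Y = Z by rewrite herm_mmse_rx.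
have YU : herm Y *m U = Z by rewrite /U /mmse_rx mulmxA.
have USU : herm U *m cov V *m U = Z by rewrite -mulmxA cov_mmse_rx UY.
have -> : icov V = cov V - Y *m herm Y by rewrite cov_icov addrK.
rewrite /P /mmse_mx -/Z hermB herm1 hermM hermK UY YU.
rewrite (mulmxBr (herm U)) (mulmxBl (herm U *m cov V)) USU (mulmxA (herm U)) UY.
rewrite -(mulmxA Z) YU !(mulmxBl, mulmxBr, mul1mx, mulmx1).
by move: (Z *m Z) => Z2; apply/matrixP => i j; rewrite !mxE; ring.
Qed.

Lemma posdef_mmse_mx V : posdef (mmse_mx V).
Proof.
set U := mmse_rx V; set P := 1%:M - herm U *m eff_chan V.
have psdP := psdef_gram P.
have psdU : psdef (herm U *m icov V *m U).
  by have := psdef_cong (herm U) (posdef_psdef (posdef_icov V)); rewrite hermK.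
rewrite mmse_mx_decomp -/U -/P; split=> [|x x0]; first by case: (psdef_add psdP psdU).
have PxE : herm P *m x = x - herm (eff_chan V) *m (U *m x).
  by rewrite /P hermB herm1 hermM hermK mulmxBl mul1mx -mulmxA.
have qP : qform (P *m herm P) x = cre (\tr (herm (herm P *m x) *m (herm P *m x))).
  by rewrite /qform hermM hermK !mulmxA.
have qU : qform (herm U *m icov V *m U) x = qform (icov V) (U *m x).
  by rewrite -{2}[U]hermK qform_cong hermK.
rewrite qformD qP qU; have [Ux0|Ux0] := eqVneq (U *m x) 0.
  by rewrite Ux0 qform0 addr0 PxE Ux0 mulmx0 subr0 mxtrace_gram_gt0.
by rewrite ltr_wpDl ?mxtrace_gram_ge0 //; case: (posdef_icov V) => _; apply.
Qed.

(* Schur complements of [[cov, Y]; [Y^H, 1]] taken in either order. *)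
Lemma det_mmse_mx V : \det (mmse_mx V) * \det (cov V) = \det (icov V).
Proof.
set S := cov V; set Y := eff_chan V; have uS : S \in unitmx by exact: unitmx_cov.
have : block_mx 1%:M 0 (herm Y *m invmx S) 1%:M *m block_mx S Y 0 (mmse_mx V) =
       block_mx 1%:M Y 0 1%:M *m block_mx (icov V) 0 (herm Y) 1%:M.
  rewrite !mulmx_block !(mul1mx, mulmx1, mul0mx, mulmx0, addr0, add0r) mulmxKV //.
  by rewrite addrC /mmse_mx /S cov_icov -/Y; congr block_mx; apply: subrK.
move/(congr1 determinant); rewrite !det_mulmx det_lblock !det_ublock det_lblock.
by rewrite !det1 !mul1r !mulr1 mulrC.
Qed.

Lemma negrateE V : negrate gk H sigma2 k V = ln (cre (\det (mmse_mx V))).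
Proof.
have uS := unitmx_cov V; have uSj := posdef_unitmx (posdef_icov V).
rewrite /negrate.
have -> : 1%:M + Hk *m V (gk k) *m herm (V (gk k)) *m herm Hk *m Jmat gk H sigma2 k V =
          cov V *m invmx (icov V).
  by rewrite cov_icov mulmxDl mulmxV // /eff_chan hermM !mulmxA.
have [e /RltP e_gt0 detE] := posdef_det (posdef_mmse_mx V).
have detS : \det (cov V) != 0 by rewrite -unitfE -unitmxE.
rewrite det_mulmx det_inv -det_mmse_mx detE invfM mulrC -mulrA mulVf // mulr1.
by rewrite -fmorphV creR -RinvE ln_Rinv //; rnorm; rewrite opprK.
Qed.

Lemma mse_mx_decomp U V :
  mse_mx U V = mmse_mx V + herm (U - mmse_rx V) *m cov V *m (U - mmse_rx V).
Proof.
have YU : herm (eff_chan V) *m mmse_rx V =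
          herm (eff_chan V) *m invmx (cov V) *m eff_chan V by rewrite /mmse_rx mulmxA.
have US : herm (mmse_rx V) *m cov V = herm (eff_chan V).
  by rewrite -herm_cov -hermM cov_mmse_rx.
rewrite hermB (mulmxBl (herm U)) US mulmxBr !mulmxBl.
rewrite -(mulmxA (herm U) (cov V) (mmse_rx V)) cov_mmse_rx YU /mse_mx /mmse_mx.
move: (herm U *m eff_chan V) (herm (eff_chan V) *m U) (herm U *m cov V *m U)
  (herm (eff_chan V) *m invmx (cov V) *m eff_chan V) => a b c d.
by apply/matrixP => i j; rewrite !mxE; ring.
Qed.

Lemma UhatE Vi : Uhat gk H sigma2 k Vi = mmse_rx Vi.
Proof. by rewrite /Uhat /mmse_rx /eff_chan mulmxA. Qed.

Lemma QhatE Vi : Qhat gk H sigma2 k Vi = mmse_mx Vi.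
Proof. by rewrite /Qhat UhatE -mulmxA -/(eff_chan Vi) herm_mmse_rx. Qed.

Section Surrogate.
Variable Vi : prec.
Local Notation Uh := (mmse_rx Vi).
Local Notation W := (invmx (mmse_mx Vi)).

Lemma AhatE : Ahat gk H sigma2 k Vi = herm Hk *m Uh *m W *m herm Uh *m Hk.
Proof. by rewrite /Ahat UhatE QhatE. Qed.

Lemma psdef_Ahat : psdef (Ahat gk H sigma2 k Vi).
Proof.
have := psdef_cong (herm Hk *m Uh) (posdef_psdef (posdef_invmx (posdef_mmse_mx Vi))).
by rewrite AhatE hermM hermK !mulmxA.
Qed.

Lemma mxtrace_W_mse_mx V : \tr (W *m mse_mx Uh V) =
  \tr W - \tr (W *m herm Uh *m eff_chan V) - \tr (W *m herm (eff_chan V) *m Uh)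
  + \sum_(g < G) \tr (herm (V g) *m Ahat gk H sigma2 k Vi *m V g)
  + RtoC (sigma2 k) * \tr (W *m herm Uh *m Uh).
Proof.
have stream_term g : \tr (W *m (herm Uh *m stream_cov V g *m Uh)) =
                     \tr (herm (V g) *m Ahat gk H sigma2 k Vi *m V g).
  have := mxtrace_mulC (herm (V g) *m herm Hk *m Uh) (W *m herm Uh *m Hk *m V g).
  by rewrite AhatE /stream_cov !mulmxA => ->.
rewrite /mse_mx /cov (mulmxDr (herm Uh)) mulmxDl mulmx_sumr mulmx_suml.
rewrite mul_mx_scalar -scalemxAl mulmxDr mulmxBr mulmxBr mulmx1 mulmxDr mulmx_sumr.
rewrite -scalemxAr !mxtraceD raddf_sum mxtraceZ addrA; congr (_ + _ + _).
- by rewrite !raddfN !mulmxA.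
- by apply: eq_bigr => g _; apply: stream_term.
- by rewrite mulmxA.
Qed.

Lemma cre_mxtrace_cross V :
  cre (\tr (W *m herm (eff_chan V) *m Uh)) = cre (\tr (W *m herm Uh *m eff_chan V)).
Proof.
have hW : herm W = W by rewrite herm_invmx; case: (posdef_mmse_mx Vi) => ->.
rewrite -mulmxA mxtrace_mulC -[RHS]cre_conjc -mxtrace_herm.
by rewrite (hermM (W *m herm Uh)) (hermM W) hermK hW mulmxA.
Qed.

Lemma hsurE V : hsur gk H sigma2 k Vi V =
  cre (\tr (W *m mse_mx Uh V)) + ln (cre (\det (mmse_mx Vi))) - N%:R.
Proof.
have trN (X : 'M[cplx]_N) : \tr (- X) = - \tr X by exact: raddfN.
rewrite /hsur /bhat /Bhat UhatE QhatE mxtrace_W_mse_mx mulNmx trN.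
rewrite -(mulmxA _ Hk) -/(eff_chan V) mulmxDr mulmx1 mxtraceD -scalemxAr mxtraceZ.
rewrite (mulmxA W); rnorm; rewrite !creD !creN cre_mxtrace_cross; lra.
Qed.

Lemma negrate_le_hsur V : negrate gk H sigma2 k V <= hsur gk H sigma2 k Vi V.
Proof.
rewrite hsurE negrateE mse_mx_decomp mulmxDr mxtraceD creD.
have := logdet_le_tangent (posdef_mmse_mx Vi) (posdef_mmse_mx V).
have : 0 <= cre (\tr (W *m (herm (Uh - mmse_rx V) *m cov V *m (Uh - mmse_rx V)))).
  apply: mxtrace_posdef_psdef_ge0 (posdef_invmx (posdef_mmse_mx Vi)) _.
  have := psdef_cong (herm (Uh - mmse_rx V)) (posdef_psdef (posdef_cov V)).
  by rewrite hermK.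
by lra.
Qed.

Lemma hsur_eq_negrate : hsur gk H sigma2 k Vi Vi = negrate gk H sigma2 k Vi.
Proof.
have trWQ : \tr (W *m mmse_mx Vi) = N%:R.
  by rewrite mulVmx; [apply: mxtrace1 | apply/posdef_unitmx/posdef_mmse_mx].
rewrite hsurE negrateE mse_mx_decomp subrr herm0 mulmx0 addr0 trWQ cre_natr.
by rewrite addrC addKr.
Qed.

Lemma hsur_quadratic V D : exists alpha beta gamma : R, 0 <= alpha /\ forall t : R,
  hsur gk H sigma2 k Vi (prec_add V (prec_scale t D)) = alpha * (t * t) + beta * t + gamma.
Proof.
set A := Ahat gk H sigma2 k Vi; set B := Bhat gk H sigma2 k Vi.
set q1 := \sum_(g < G) (\tr (herm (D g) *m A *m V g) + \tr (herm (V g) *m A *m D g)).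
set q2 := \sum_(g < G) \tr (herm (D g) *m A *m D g).
exists (cre q2), (cre q1 + 2 * cre (\tr (B *m D (gk k)))), (hsur gk H sigma2 k Vi V).
split=> [|t].
  rewrite /q2 cre_sum; apply: sumr_ge0 => g _; apply: psdef_mxtrace_ge0.
  by have := psdef_cong (herm (D g)) psdef_Ahat; rewrite hermK.
have line g : \tr (herm (V g + RtoC t *: D g) *m A *m (V g + RtoC t *: D g)) =
  \tr (herm (V g) *m A *m V g) + RtoC t * (\tr (herm (D g) *m A *m V g) +
  \tr (herm (V g) *m A *m D g)) + RtoC (t * t) * \tr (herm (D g) *m A *m D g).
  rewrite hermD hermZ conjc_RtoC !mulmxDl !mulmxDr -!scalemxAl -!scalemxAr !scalerA.
  rewrite !mxtraceD !mxtraceZ rmorphM; ring.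
rewrite /hsur /prec_add /prec_scale -/A -/B (eq_bigr _ (fun g _ => line g)).
rewrite !big_split /= -!mulr_sumr -/q1 -/q2 mulmxDr mxtraceD -scalemxAr mxtraceZ.
by rewrite !creD !creRM; rnorm; lra.
Qed.

Lemma hsur_convex V V' t : 0 <= t -> t <= 1 ->
  hsur gk H sigma2 k Vi (prec_add (prec_scale t V) (prec_scale (1 - t) V'))
  <= t * hsur gk H sigma2 k Vi V + (1 - t) * hsur gk H sigma2 k Vi V'.
Proof.
move=> t_ge0 t_le1; pose D g := V g - V' g.
have [a [b [c [a_ge0 hq]]]] := hsur_quadratic V' D.
have line s : prec_add V' (prec_scale s D) =1 fun g => V' g + RtoC s *: D g by [].
have e1 : prec_add (prec_scale t V) (prec_scale (1 - t) V') = prec_add V' (prec_scale t D).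
  apply: functional_extensionality => g; rewrite line /prec_add /prec_scale /D.
  rewrite rmorphB rmorph1 scalerBl scalerBr scale1r.
  by apply/matrixP => i j; rewrite !mxE; ring.
have e2 : prec_add V' (prec_scale 1 D) = V.
  by apply: functional_extensionality => g; rewrite line rmorph1 scale1r /D addrC subrK.
have e3 : prec_add V' (prec_scale 0 D) = V'.
  by apply: functional_extensionality => g; rewrite line rmorph0 scale0r addr0.
rewrite e1 hq; move: (hq 1) (hq 0); rewrite e2 e3 => -> ->.
have : 0 <= a * t * (1 - t) by rewrite !mulr_ge0 // subr_ge0.
by nra.
Qed.

End Surrogate.

Lemma stream_cov_line V D t g :
  stream_cov (prec_add V (prec_scale t D)) g = stream_cov V g
  + RtoC t *: (Hk *m (V g *m herm (D g) + D g *m herm (V g)) *m herm Hk)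
  + RtoC (t * t) *: stream_cov D g.
Proof.
rewrite /stream_cov /prec_add /prec_scale hermD hermZ conjc_RtoC.
rewrite !(mulmxDr, mulmxDl, =^~ scalemxAl, =^~ scalemxAr) !mulmxA !scalerA rmorphM.
move: (Hk *m V g *m herm (V g) *m herm Hk) (Hk *m D g *m herm (V g) *m herm Hk)
  (Hk *m V g *m herm (D g) *m herm Hk) (Hk *m D g *m herm (D g) *m herm Hk) => a b c e.
by apply/matrixP => i j; rewrite !mxE; ring.
Qed.

Lemma sum_stream_cov_line (P : pred 'I_G) V D t :
  \sum_(g < G | P g) stream_cov (prec_add V (prec_scale t D)) g =
  \sum_(g < G | P g) stream_cov V g
  + RtoC t *: \sum_(g < G | P g) Hk *m (V g *m herm (D g) + D g *m herm (V g)) *m herm Hk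
  + RtoC (t * t) *: \sum_(g < G | P g) stream_cov D g.
Proof.
by rewrite (eq_bigr _ (fun g _ => stream_cov_line V D t g)) !big_split /= !scaler_sumr.
Qed.

Lemma derivable_pt_logdet_line (P : pred 'I_G) V D x :
  derivable_pt (fun t => ln (cre (\det (\sum_(g < G | P g)
    stream_cov (prec_add V (prec_scale t D)) g + (RtoC (sigma2 k))%:M)))) x.
Proof.
apply: derivable_pt_ln_comp.
  have := posdef_noise_plus_psdef P (prec_add V (prec_scale x D)).
  by case/posdef_det => d d_gt0 ->.
set S0 := \sum_(g < G | P g) stream_cov V g.
set S1 := \sum_(g < G | P g) Hk *m (V g *m herm (D g) + D g *m herm (V g)) *m herm Hk.
set S2 := \sum_(g < G | P g) stream_cov D g.
have := derivable_pt_det_quadratic (S0 + (RtoC (sigma2 k))%:M) S1 S2 x.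
apply: derivable_pt_ext.
move=> t; rewrite sum_stream_cov_line -/S0 -/S1 -/S2 [S0 + _ + RtoC t *: S1]addrAC.
by congr (cre (\det _)); apply: addrAC.
Qed.

Lemma negrate_logdet V :
  negrate gk H sigma2 k V = ln (cre (\det (icov V))) - ln (cre (\det (cov V))).
Proof.
have [e /RltP e_gt0 detE] := posdef_det (posdef_mmse_mx V).
have [s /RltP s_gt0 detS] := posdef_det (posdef_cov V).
by rewrite negrateE -det_mmse_mx detE detS -rmorphM creR ln_mult // !creR addrK.
Qed.

Lemma derivable_pt_negrate_line V D x :
  derivable_pt (fun t => negrate gk H sigma2 k (prec_add V (prec_scale t D))) x.
Proof.
apply: derivable_pt_ext (derivable_pt_minus _ _ x (derivable_pt_logdet_line _ V D x)
  (derivable_pt_logdet_line xpredT V D x)) => t.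
by rewrite negrate_logdet.
Qed.

(* [hsur Vi] lies above [negrate] and touches it at [Vi]. *)
Lemma hsur_negrate_derivative Vi D : exists l,
  derivable_pt_lim (fun t => hsur gk H sigma2 k Vi (prec_add Vi (prec_scale t D))) 0 l /\
  derivable_pt_lim (fun t => negrate gk H sigma2 k (prec_add Vi (prec_scale t D))) 0 l.
Proof.
have [a [b [c [_ hq]]]] := hsur_quadratic Vi Vi D.
have dh : derivable_pt_lim
    (fun t => hsur gk H sigma2 k Vi (prec_add Vi (prec_scale t D))) 0 b.
  have := derivable_pt_lim_quadratic a b c 0; rewrite addr0 mulr0 add0r.
  by apply: derivable_pt_lim_ext => t; rewrite hq.
have [m dn] := derivable_pt_negrate_line Vi D 0.
exists b; split=> //; rewrite -(derivable_pt_lim_touching _ _ dh dn) //.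
  by move=> t; apply: negrate_le_hsur.
have line0 : prec_add Vi (prec_scale 0 D) = Vi.
  apply: functional_extensionality => g.
  by rewrite /prec_add /prec_scale rmorph0 scale0r addr0.
by rewrite line0 hsur_eq_negrate.
Qed.

Lemma hsur_negrate_entry_derivative Vi g a b c : exists l,
  derivable_pt_lim (fun t => hsur gk H sigma2 k Vi (perturb Vi g a b (RtoC t * c))) 0 l /\
  derivable_pt_lim (fun t => negrate gk H sigma2 k (perturb Vi g a b (RtoC t * c))) 0 l.
Proof.
pose D g' : 'M[cplx]_(M, N) := if g' == g then c *: delta_mx a b else 0.
have eD t : perturb Vi g a b (RtoC t * c) = prec_add Vi (prec_scale t D).
  apply: functional_extensionality => g'; rewrite /perturb /prec_add /prec_scale /D.
  by case: (g' == g); rewrite ?scalerA ?scaler0 ?addr0.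
have [l [dh dn]] := hsur_negrate_derivative Vi D.
by exists l; split; [move: dh | move: dn]; apply: derivable_pt_lim_ext => t; rewrite eD.
Qed.

End Model.

Theorem mainTheorem3
  (G K N M : nat) (gk : 'I_K -> 'I_G)
  (H : 'I_K -> 'M[cplx]_(N, M)) (sigma2 : 'I_K -> R)
  (hsigma : forall k, Rlt R0 (sigma2 k))
  (hN : (0 < N)%N) (hNM : (N < M)%N)
  (k : 'I_K) (Vi : 'I_G -> 'M[cplx]_(M, N)) :
  (forall V : 'I_G -> 'M[cplx]_(M, N),
      Rge (hsur gk H sigma2 k Vi V) (negrate gk H sigma2 k V))
  /\ hsur gk H sigma2 k Vi Vi = negrate gk H sigma2 k Vi
  /\ (forall (g : 'I_G) (a : 'I_M) (b : 'I_N),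
        (exists l : R,
           derivable_pt_lim
             (fun t => hsur gk H sigma2 k Vi (perturb Vi g a b (RtoC t))) R0 l
        /\ derivable_pt_lim
             (fun t => negrate gk H sigma2 k (perturb Vi g a b (RtoC t))) R0 l)
     /\ (exists l : R,
           derivable_pt_lim
             (fun t => hsur gk H sigma2 k Vi (perturb Vi g a b (cmul iC (RtoC t)))) R0 l
        /\ derivable_pt_lim
             (fun t => negrate gk H sigma2 k (perturb Vi g a b (cmul iC (RtoC t)))) R0 l))
  /\ (forall V W : 'I_G -> 'M[cplx]_(M, N),
        exists alpha beta gamma : R, Rle R0 alpha /\
          forall t : R,
            hsur gk H sigma2 k Vi (prec_add V (prec_scale t W))
            = Rplus (Rplus (Rmult alpha (Rmult t t)) (Rmult beta t)) gamma)
  /\ (forall (V W : 'I_G -> 'M[cplx]_(M, N)) (t : R),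
        Rle R0 t -> Rle t R1 ->
        Rle (hsur gk H sigma2 k Vi (prec_add (prec_scale t V) (prec_scale (Rminus R1 t) W)))
            (Rplus (Rmult t (hsur gk H sigma2 k Vi V))
                   (Rmult (Rminus R1 t) (hsur gk H sigma2 k Vi W)))).
Proof.
have /RltP sk := hsigma k.
split; [|split; [|split; [|split]]].
- by move=> V; apply/Rle_ge/RleP/negrate_le_hsur.
- exact: hsur_eq_negrate.
- move=> g a b; split.
  + have [l [dh dn]] := hsur_negrate_entry_derivative gk H sk Vi g a b 1.
    by exists l; split; [move: dh | move: dn]; apply: derivable_pt_lim_ext => t;
      rewrite mulr1.
  + have [l [dh dn]] := hsur_negrate_entry_derivative gk H sk Vi g a b iC.
    by exists l; split; [move: dh | move: dn]; apply: derivable_pt_lim_ext => t;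
      rewrite mulrC.
- move=> V W; have [a [b [c [a_ge0 hq]]]] := hsur_quadratic gk H sk Vi V W.
  by exists a, b, c; split; [apply/RleP | apply: hq].
- by move=> V W t /RleP t_ge0 /RleP t_le1; apply/RleP/hsur_convex.
Qed.
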